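(* Let $\Lambda$ be a finite $k$-graph without sources, $F$ a well chosen sequence, $C$ an $F$-harmonic component, and $x_F^C$ the unique vector in $[0,\infty)^{\Lambda^0}$ of unit $1$-norm with $A_Fx_F^C=\rho(A_F^C)x_F^C$ and $(x_F^C)_v=0$ for $v\notin\overline C$. Then $A_ix_F^C=\rho(A_i^C)\,x_F^C$ for every $i=1,\dots,k$.
   Context: A $k$-graph $(\Lambda,d)$ is a countable small category with functor $d:\Lambda\to\mathbb N^k$ having the unique factorisation property (for $d(\lambda)=m+n$ there are unique $\mu,\nu$ with $d(\mu)=m,d(\nu)=n,\lambda=\mu\nu$). $\Lambda^0=d^{-1}(0)$ are the vertices, $\Lambda^n=d^{-1}(n)$, $r,s$ range and source, $v\Lambda^nw=\{\lambda\in\Lambda^n:r(\lambda)=v,s(\lambda)=w\}$, $v\Lambda w=\bigcup_n v\Lambda^n w$, and for $V,W\subseteq\Lambda^0$, $V\Lambda W=\bigcup_{v\in V,w\in W}v\Lambda w$. Finite: each $\Lambda^n$ finite; without sources: $v\Lambda^n\neq\emptyset$ for all $v,n$. Vertex matrices $A_i(v,w)=|v\Lambda^{e_i}w|$, $A^n=\prod_iA_i^{n_i}$. Define $v\le w$ iff $v\Lambda w\ne\emptyset$ and $v\sim w$ iff $v\le w$ and $w\le v$; the equivalence classes are components. A component $C$ is trivial if $C\Lambda C=\{v\}$ for a single vertex $v$, non-trivial otherwise. The closure of $V\subseteq\Lambda^0$ is $\overline V=\{w\in\Lambda^0:w\Lambda V\ne\emptyset\}$. For a $\Lambda^0\times\Lambda^0$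 matrix $B$ and $R,S\subseteq\Lambda^0$, $B^{R,S}$ is the submatrix with rows $R$ and columns $S$, $B^S=B^{S,S}$, and $\rho$ denotes spectral radius. For a finite sequence $F=(a_1,\dots,a_m)$ in $\mathbb N^k\setminus\{0\}$ (repetitions allowed), $A_F=\sum_{j=1}^mA^{a_j}$, and $A_F^{R,S}$ means $(A_F)^{R,S}$; $F$ is well chosen if for all $v,w$: $A_F(v,w)>0$ iff $v\Lambda^lw\neq\emptyset$ for some $l\in\mathbb N^k\setminus\{0\}$. A non-trivial component $C$ is $F$-harmonic if either $\overline C\setminus C=\emptyset$ or $\rho(A_F^C)>\rho(A_F^{\overline C\setminus C})$. *)

From HB Require Import structures.
From mathcomp Require Import all_boot all_order all_algebra all_field.
From Stdlib Require Import ClassicalEpsilon.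
Set Implicit Arguments. Unset Strict Implicit. Unset Printing Implicit Defensive.
Import Order.TTheory GRing.Theory Num.Theory.
Local Open Scope ring_scope.

Definition asbool (P : Prop) : bool :=
  if excluded_middle_informative P then true else false.

Definition deg k := {ffun 'I_k -> nat}.
Definition deg0 k : deg k := [ffun => 0%N].
Definition degD k (m n : deg k) : deg k := [ffun j => (m j + n j)%N].
Definition deg_e k (i : 'I_k) : deg k := [ffun j => nat_of_bool (j == i)].

(* Data of a k-graph whose set of vertices (objects) is 'I_n.
   [mor] : the morphisms (a countable type), [rg]/[sr] : range/source,
   [dg] : the degree functor, [vid v] : identity morphism at v,
   [cmp mu nu] : composite mu nu (meaningful when sr mu = rg nu),
   [paths m] : an enumeration of Lambda^m (used for finiteness). *)
Record kgraph_data (k n : nat) := KGraphData {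
  mor : countType;
  rg : mor -> 'I_n;
  sr : mor -> 'I_n;
  dg : mor -> deg k;
  vid : 'I_n -> mor;
  cmp : mor -> mor -> mor;
  paths : deg k -> seq mor
}.
Arguments mor {k n} _.
Arguments rg {k n} _ _.
Arguments sr {k n} _ _.
Arguments dg {k n} _ _.
Arguments vid {k n} _ _.
Arguments cmp {k n} _ _ _.
Arguments paths {k n} _ _.

Section KGraph.
Variables (k n : nat) (G : kgraph_data k n).
Local Notation M := (mor G).

Definition is_kgraph : Prop :=
  [/\ (forall v, [/\ rg G (vid G v) = v, sr G (vid G v) = v & dg G (vid G v) = deg0 k]),
      (forall mu nu : M, sr G mu = rg G nu ->
         [/\ rg G (cmp G mu nu) = rg G mu, sr G (cmp G mu nu) = sr G nu &
             dg G (cmp G mu nu) = degD (dg G mu) (dg G nu)]),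
      (forall l : M, cmp G (vid G (rg G l)) l = l /\ cmp G l (vid G (sr G l)) = l),
      (forall l mu nu : M, sr G l = rg G mu -> sr G mu = rg G nu ->
         cmp G (cmp G l mu) nu = cmp G l (cmp G mu nu)) &
      (forall (l : M) (m p : deg k), dg G l = degD m p ->
         exists mu : M, exists nu : M,
           [/\ dg G mu = m, dg G nu = p, sr G mu = rg G nu, l = cmp G mu nu &
               forall mu' nu' : M, dg G mu' = m -> dg G nu' = p ->
                 sr G mu' = rg G nu' -> l = cmp G mu' nu' -> mu' = mu /\ nu' = nu])].

Definition kgraph_finite : Prop :=
  forall m : deg k, uniq (paths G m) /\ forall l : M, (l \in paths G m) = (dg G l == m).

Definition no_sources : Prop :=
  forall (v : 'I_n) (m : deg k), exists l : M, rg G l = v /\ dg G l = m.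

Definition vmx (i : 'I_k) : 'M[algC]_n :=
  \matrix_(v, w) (count (fun l => (rg G l == v) && (sr G l == w)) (paths G (deg_e i)))%:R.

Definition vmx_pow (m : deg k) : 'M[algC]_n := \prod_(i < k) vmx i ^+ m i.

Definition vmx_seq (F : seq (deg k)) : 'M[algC]_n := \sum_(a <- F) vmx_pow a.

Definition well_chosen (F : seq (deg k)) : Prop :=
  (forall a, a \in F -> a != deg0 k) /\
  forall v w : 'I_n, (0 < vmx_seq F v w) <->
    exists l : M, [/\ rg G l = v, sr G l = w & dg G l != deg0 k].

Definition vle (v w : 'I_n) : Prop := exists l : M, rg G l = v /\ sr G l = w.
Definition vequiv (v w : 'I_n) : Prop := vle v w /\ vle w v.

Definition is_component (C : {set 'I_n}) : Prop :=
  exists v, C = [set w | asbool (vequiv v w)].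

Definition trivial_component (C : {set 'I_n}) : Prop :=
  exists v : 'I_n, forall l : M, (rg G l \in C /\ sr G l \in C) <-> l = vid G v.

Definition vclosure (V : {set 'I_n}) : {set 'I_n} :=
  [set w | asbool (exists l : M, rg G l = w /\ sr G l \in V)].

End KGraph.

Definition submx_set n (B : 'M[algC]_n) (R S : {set 'I_n}) : 'M[algC]_(#|R|, #|S|) :=
  \matrix_(i, j) B (enum_val i) (enum_val j).
Definition submx_sq n (B : 'M[algC]_n) (S : {set 'I_n}) : 'M[algC]_#|S| :=
  submx_set B S S.

(* spectral radius: max |z| over the eigenvalues z (roots of char. poly);
   0 for the empty matrix *)
Definition specrad m (B : 'M[algC]_m) : algC :=
  \big[Num.max/0]_(z <- sval (closed_field_poly_normal (char_poly B))) `|z|.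

Definition F_harmonic k n (G : kgraph_data k n) (F : seq (deg k)) (C : {set 'I_n}) : Prop :=
  is_component G C /\ ~ trivial_component G C /\
  (vclosure G C :\: C = set0 \/
   specrad (submx_sq (vmx_seq G F) (vclosure G C :\: C)) < specrad (submx_sq (vmx_seq G F) C)).

From HB Require Import structures.
From mathcomp Require Import all_boot all_order all_algebra all_field.
From Stdlib Require Import Classical ClassicalEpsilon.
Set Implicit Arguments. Unset Strict Implicit. Unset Printing Implicit Defensive.
Import Order.TTheory GRing.Theory Num.Theory.
Local Open Scope ring_scope.

(* A_i commutes with A_F, because by unique factorisation both A_i A_j and A_j A_i count
   the paths of degree e_i + e_j.  Hence A_i x is again a nonnegative eigenvector of A_F
   for rho(A_F^C) supported in the closure of C, and uniqueness gives A_i x = s x.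
   Harmonicity forces x to be nonzero somewhere on C (otherwise its restriction to the
   closure minus C would be an eigenvector there for an eigenvalue exceeding the spectral
   radius), and as C is a nontrivial component and F is well chosen, x is then positive
   on all of C.  So x restricted to C is a positive eigenvector of the nonnegative matrix
   A_i^C for s, and the Perron bound |z| <= s for every eigenvalue z gives s = rho(A_i^C). *)

Lemma count_allpairs_chain (T : Type) (n : nat) (s t : seq T) (src tgt : T -> 'I_n)
    (v w : 'I_n) :
  count (fun q => [&& src q.1 == v, tgt q.1 == src q.2 & tgt q.2 == w])
        [seq (a, b) | a <- s, b <- t] =
  (\sum_(u < n) count (fun a => (src a == v) && (tgt a == u)) s *
                count (fun b => (src b == u) && (tgt b == w)) t)%N.
Proof.
elim: s => [|a s IHs] /=; first by rewrite big1.
rewrite count_cat IHs count_map.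
under [RHS]eq_bigr => u _ do rewrite mulnDl.
rewrite big_split /=; congr addn.
rewrite (bigD1 (tgt a)) //= eqxx andbT big1 ?addn0 => [|u /negbTE neq_u]; last first.
  by rewrite [tgt a == u]eq_sym neq_u andbF.
have [src_a|/negbTE src_a] := boolP (src a == v);
  rewrite ?mul1n ?mul0n -?(count_pred0 t); apply: eq_count => b /=.
  by rewrite src_a [tgt a == _]eq_sym.
by rewrite src_a.
Qed.

Lemma mem_allpairs_pair (S T : eqType) (s : seq S) (t : seq T) a b :
  ((a, b) \in [seq (x, y) | x <- s, y <- t]) = (a \in s) && (b \in t).
Proof.
apply/allpairsP/andP => [[[x y] [/= ? ? [-> ->]]] // | [sa tb]].
by exists (a, b).
Qed.

Lemma degDC k (a b : deg k) : degD a b = degD b a.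
Proof. by apply/ffunP => j; rewrite !ffunE addnC. Qed.

Lemma degD_eq0 k (a b : deg k) : degD a b = deg0 k -> a = deg0 k /\ b = deg0 k.
Proof.
move/ffunP=> ab0; split; apply/ffunP => j; move/eqP: (ab0 j); rewrite !ffunE;
  by rewrite addn_eq0 => /andP[/eqP ? /eqP ?].
Qed.

Section PathCounting.
Variables (k n : nat) (G : kgraph_data k n).
Hypotheses (HG : is_kgraph G) (Hfin : kgraph_finite G).

Definition npaths (m : deg k) (v w : 'I_n) : nat :=
  count (fun l => (rg G l == v) && (sr G l == w)) (paths G m).

Lemma mem_paths m l : (l \in paths G m) = (dg G l == m).
Proof. by case: (Hfin m). Qed.

Lemma cmp_inj {m p} {a b c d : mor G} :
  dg G a = m -> dg G b = p -> sr G a = rg G b ->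
  dg G c = m -> dg G d = p -> sr G c = rg G d ->
  cmp G a b = cmp G c d -> a = c /\ b = d.
Proof.
case: HG => _ Hcmp _ _ Hfac da db ab dc dd cd eq_ab_cd.
have [_ _ dab] := Hcmp a b ab.
have [mu [nu [_ _ _ _ uniq_fact]]] := Hfac (cmp G a b) m p (etrans dab (congr2 _ da db)).
have [-> ->] := uniq_fact a b da db ab erefl.
by have [-> ->] := uniq_fact c d dc dd cd eq_ab_cd.
Qed.

Lemma npaths_degD_pairs m p v w :
  npaths (degD m p) v w =
  count (fun q => [&& rg G q.1 == v, sr G q.1 == rg G q.2 & sr G q.2 == w])
        [seq (a, b) | a <- paths G m, b <- paths G p].
Proof.
(* Composition maps the composable pairs bijectively onto the paths of degree m + p. *)
case: HG => _ Hcmp _ _ Hfac.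
rewrite /npaths -!size_filter -(size_map (fun q => cmp G q.1 q.2)).
apply/esym/perm_size/uniq_perm.
- rewrite map_inj_in_uniq ?filter_uniq ?allpairs_uniq //;
    [by case: (Hfin m) | by case: (Hfin p) | by move=> [? ?] [? ?] _ _ [-> ->] |].
  move=> [a b] [c d]; rewrite !mem_filter !mem_allpairs_pair !mem_paths /=.
  case/andP=> /and3P[_ /eqP ab _] /andP[/eqP da /eqP db].
  case/andP=> /and3P[_ /eqP cd _] /andP[/eqP dc /eqP dd].
  by move=> /(cmp_inj da db ab dc dd cd) [-> ->].
- by rewrite filter_uniq //; case: (Hfin (degD m p)).
move=> l; rewrite mem_filter; apply/mapP/idP => [[[a b]]|].
  rewrite mem_filter mem_allpairs_pair !mem_paths /=.
  case/andP=> /and3P[/eqP ra /eqP ab /eqP sb] /andP[/eqP da /eqP db] ->.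
  by have [-> -> ->] := Hcmp a b ab; rewrite ra sb da db !eqxx.
rewrite mem_paths => /andP[/andP[/eqP rl /eqP sl] /eqP dl].
have [mu [nu [dmu dnu mn El _]]] := Hfac l m p dl.
have [rmn smn _] := Hcmp mu nu mn.
exists (mu, nu) => //.
by rewrite mem_filter mem_allpairs_pair !mem_paths /= -rmn -smn -El rl sl mn dmu dnu !eqxx.
Qed.

Lemma npaths_degD m p v w :
  npaths (degD m p) v w = (\sum_(u < n) npaths m v u * npaths p u w)%N.
Proof. by rewrite npaths_degD_pairs count_allpairs_chain. Qed.

Lemma vmx_mul i j :
  vmx G i *m vmx G j = \matrix_(v, w) (npaths (degD (deg_e i) (deg_e j)) v w)%:R.
Proof.
apply/matrixP => v w; rewrite !mxE npaths_degD natr_sum.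
by apply: eq_bigr => u _; rewrite !mxE natrM.
Qed.

Lemma vmx_comm i j : vmx G i *m vmx G j = vmx G j *m vmx G i.
Proof. by rewrite !vmx_mul degDC. Qed.

Lemma vmx_seq_comm F i : vmx G i *m vmx_seq G F = vmx_seq G F *m vmx G i.
Proof.
rewrite mulmxE; apply: commr_sum => a _; apply: commr_prod => j _.
by apply: commrX; rewrite /GRing.comm -!mulmxE vmx_comm.
Qed.

End PathCounting.

Lemma asboolP (P : Prop) : reflect P (asbool P).
Proof. by rewrite /asbool; case: excluded_middle_informative => H; constructor. Qed.

Section Reachability.
Variables (k n : nat) (G : kgraph_data k n).
Hypothesis HG : is_kgraph G.

Definition nzpath (u v : 'I_n) : Prop :=
  exists l : mor G, [/\ rg G l = u, sr G l = v & dg G l != deg0 k].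

Lemma vle_refl v : vle G v v.
Proof. by case: HG => Hid _ _ _ _; have [r s _] := Hid v; exists (vid G v). Qed.

Lemma vle_trans u v w : vle G u v -> vle G v w -> vle G u w.
Proof.
case: HG => _ Hcmp _ _ _ [l1 [r1 s1]] [l2 [r2 s2]].
by exists (cmp G l1 l2); have [-> -> _] := Hcmp l1 l2 (etrans s1 (esym r2)).
Qed.

Lemma vle_nzpath u u' v' v : vle G u u' -> nzpath u' v' -> vle G v' v -> nzpath u v.
Proof.
case: HG => _ Hcmp _ _ _ [l1 [r1 s1]] [l2 [r2 s2 d2]] [l3 [r3 s3]].
have [r12 s12 d12] := Hcmp l1 l2 (etrans s1 (esym r2)).
have [r123 s123 d123] := Hcmp (cmp G l1 l2) l3 (etrans s12 (etrans s2 (esym r3))).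
exists (cmp G (cmp G l1 l2) l3); split; [by rewrite r123 r12 | by rewrite s123 |].
apply/eqP; rewrite d123 d12 => /degD_eq0[/degD_eq0[_ d2_0] _].
by rewrite d2_0 eqxx in d2.
Qed.

Lemma deg0_vid (l : mor G) : dg G l = deg0 k -> l = vid G (rg G l).
Proof.
case: HG => Hid _ Hunit _ Hfac dl.
have [r0 s0 d0] := Hid (rg G l); have [r1 s1 d1] := Hid (sr G l).
have dl00 : dg G l = degD (deg0 k) (deg0 k) by rewrite dl; apply/ffunP => j; rewrite !ffunE.
have [mu [nu [_ _ _ _ uniq_fact]]] := Hfac l _ _ dl00.
have [-> _] := uniq_fact _ _ d0 dl (etrans s0 erefl) (esym (proj1 (Hunit l))).
by have [-> _] := uniq_fact _ _ dl d1 (esym r1) (esym (proj2 (Hunit l))).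
Qed.

Lemma vle_neq_nzpath u v : vle G u v -> u != v -> nzpath u v.
Proof.
case=> l [<- <-] neq_rs; exists l; split => //; apply/eqP => /deg0_vid l_id.
case: HG => Hid _ _ _ _; have [r0 s0 _] := Hid (rg G l).
by rewrite l_id r0 s0 eqxx in neq_rs.
Qed.

Lemma mem_vclosure C w : (w \in vclosure G C) <-> exists2 c, c \in C & vle G w c.
Proof.
rewrite inE; split => [/asboolP [l [<- sl]] | [c Cc [l [<- slc]]]].
  by exists (sr G l) => //; exists l.
by apply/asboolP; exists l; rewrite slc.
Qed.

Lemma vle_vclosure C v w : vle G v w -> w \in vclosure G C -> v \in vclosure G C.
Proof.
move=> vw /mem_vclosure [c Cc wc]; apply/mem_vclosure.
by exists c => //; apply: vle_trans vw wc.
Qed.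

Section Component.
Variable C : {set 'I_n}.
Hypothesis HC : is_component G C.

Lemma component_vle a b : a \in C -> b \in C -> vle G a b.
Proof.
case: HC => c ->; rewrite !inE => /asboolP[_ ca] /asboolP[cb _].
exact: vle_trans ca cb.
Qed.

Lemma component_vclosure v w : v \in C -> w \in vclosure G C -> vle G v w -> w \in C.
Proof.
move=> Cv /mem_vclosure [c Cc wc] vw; move: HC Cv Cc => [c0 ->].
rewrite !inE => /asboolP[c0v vc0] /asboolP[_ cc0].
by apply/asboolP; split; [apply: vle_trans c0v vw | apply: vle_trans wc cc0].
Qed.

Lemma component_loop a : a \in C -> ~ trivial_component G C ->
  exists2 l : mor G, (rg G l \in C) && (sr G l \in C) & l <> vid G a.
Proof.
move=> Ca nontriv; apply: NNPP => no_loop; apply: nontriv; exists a => l.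
split=> [[Cr Cs] | ->].
  by apply: NNPP => neq_l; apply: no_loop; exists l; rewrite ?Cr ?Cs.
by case: HG => Hid _ _ _ _; have [-> -> _] := Hid a; rewrite Ca.
Qed.

Lemma component_nzpath a b : ~ trivial_component G C ->
  a \in C -> b \in C -> nzpath a b.
Proof.
move=> nontriv Ca Cb; have [<- | neq_ab] := eqVneq a b; last first.
  exact: vle_neq_nzpath (component_vle Ca Cb) neq_ab.
have [l /andP[Cr Cs] neq_l] := component_loop Ca nontriv.
have [dl | ndl] := eqVneq (dg G l) (deg0 k).
  have neq_ra : a != rg G l by apply: contra_not_neq neq_l => ->; apply: deg0_vid.
  exact: vle_nzpath (vle_refl a) (vle_neq_nzpath (component_vle Ca Cr) neq_ra)
                    (component_vle Cr Ca).
apply: vle_nzpath (component_vle Ca Cr) _ (component_vle Cs Ca).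
by exists l.
Qed.

End Component.
End Reachability.

Lemma char_poly_trmx (R : comNzRingType) m (B : 'M[R]_m) : char_poly B^T = char_poly B.
Proof.
rewrite /char_poly -det_tr; congr (\det _).
by apply/matrixP => i j; rewrite !mxE eq_sym.
Qed.

Lemma root_char_polyP (R : fieldType) m (B : 'M[R]_m) z :
  reflect (exists2 u : 'cV_m, B *m u = z *: u & u != 0) (root (char_poly B) z).
Proof.
rewrite -char_poly_trmx -eigenvalue_root_char.
apply: (iffP eigenvalueP) => [[v vB nz_v] | [u Bu nz_u]].
  by exists v^T; rewrite ?trmx_eq0 // -[B]trmxK -trmx_mul vB linearZ.
by exists u^T; rewrite ?trmx_eq0 // -trmx_mul Bu linearZ.
Qed.

Section BigmaxNorm.
Variable R : numDomainType.
Implicit Type s : seq R.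

Lemma bigmax_norm_ge0 s : 0 <= \big[Num.max/0]_(z <- s) `|z|.
Proof.
elim: s => [|a s IH]; rewrite ?big_nil // big_cons.
by rewrite comparable_le_max ?IH ?orbT // real_comparable ?ger0_real.
Qed.

Lemma le_bigmax_norm s z : z \in s -> `|z| <= \big[Num.max/0]_(y <- s) `|y|.
Proof.
elim: s => // a s IH; rewrite inE big_cons => /predU1P[-> | sz];
  rewrite comparable_le_max ?real_comparable ?ger0_real ?bigmax_norm_ge0 //.
  by rewrite lexx.
by rewrite IH ?orbT.
Qed.

End BigmaxNorm.

Section SpectralRadius.
Variable m : nat.
Implicit Types (B : 'M[algC]_m) (u : 'cV[algC]_m).

Lemma mem_char_roots B z :
  (z \in sval (closed_field_poly_normal (char_poly B))) = root (char_poly B) z.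
Proof.
case: closed_field_poly_normal => r /= ->.
by rewrite (monicP (char_poly_monic B)) scale1r root_prod_XsubC.
Qed.

Lemma specrad_ge0 B : 0 <= specrad B.
Proof. exact: bigmax_norm_ge0. Qed.

Lemma specrad_ge B u z : B *m u = z *: u -> u != 0 -> `|z| <= specrad B.
Proof.
move=> Bu nz_u; apply: le_bigmax_norm.
by rewrite mem_char_roots; apply/root_char_polyP; exists u.
Qed.

Lemma specrad_le B c : 0 <= c ->
  (forall u z, B *m u = z *: u -> u != 0 -> `|z| <= c) -> specrad B <= c.
Proof.
move=> c_ge0 bound; rewrite /specrad big_seq; apply: bigmax_le => // z.
by rewrite mem_char_roots => /root_char_polyP [u Bu nz_u]; apply: bound Bu nz_u.
Qed.

End SpectralRadius.

Definition nnmx (R : numDomainType) m p (B : 'M[R]_(m, p)) : Prop := forall i j, 0 <= B i j.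

Lemma nnmx_mul (R : numDomainType) m p q (A : 'M[R]_(m, p)) (B : 'M[R]_(p, q)) :
  nnmx A -> nnmx B -> nnmx (A *m B).
Proof. by move=> A_ge0 B_ge0 i j; rewrite mxE sumr_ge0 // => l _; rewrite mulr_ge0. Qed.

Lemma cV_neq0P (R : nmodType) m (u : 'cV[R]_m) : reflect (exists i, u i 0 != 0) (u != 0).
Proof.
apply: (iffP idP) => [nz_u | [i]]; last by apply: contraNneq => ->; rewrite mxE.
apply/existsP; apply: contraNT nz_u => /existsPn u0.
by apply/eqP/matrixP => i j; rewrite (ord1 j) mxE; apply/eqP/negPn.
Qed.

Section NonnegativeMatrices.
Variables (R : numFieldType) (m : nat) (B : 'M[R]_m).
Hypothesis B_ge0 : nnmx B.

Lemma nnmx_eigvec_pos (x : 'cV[R]_m) c u v : (forall w, 0 <= x w 0) ->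
  B *m x = c *: x -> 0 < B u v -> 0 < x v 0 -> 0 < x u 0.
Proof.
move=> x_ge0 Bx Buv xv; rewrite lt_def x_ge0 andbT.
have cxu_gt0 : 0 < c * x u 0.
  rewrite (_ : c * x u 0 = (B *m x) u 0); last by rewrite Bx mxE.
  rewrite mxE (bigD1 v) //= ltr_pwDl ?mulr_gt0 // sumr_ge0 // => w _.
  by rewrite mulr_ge0.
by apply: contraTneq cxu_gt0 => ->; rewrite mulr0 ltxx.
Qed.

Lemma norm_eigval_le_pos_eigval (x u : 'cV[R]_m) c z : (forall i, 0 < x i 0) ->
  B *m x = c *: x -> B *m u = z *: u -> u != 0 -> `|z| <= c.
Proof.
move=> x_gt0 Bx Bu /cV_neq0P [i0 u_i0].
pose ratio i := `|u i 0| / x i 0.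
have ratio_real i : ratio i \is Num.real by apply/ger0_real/divr_ge0/ltW.
have [j _ ratio_max] := @comparable_arg_maxP _ _ _ i0 predT ratio erefl
  (fun i j _ _ => real_comparable (ratio_real i) (ratio_real j)).
have u_le i : `|u i 0| <= ratio j * x i 0 by rewrite -ler_pdivrMr //; apply: ratio_max.
have u_j : `|u j 0| = ratio j * x j 0 by rewrite divfK ?gt_eqF.
have ratio_gt0 : 0 < ratio j.
  by apply: lt_le_trans (ratio_max i0 erefl); rewrite divr_gt0 ?normr_gt0.
(* Evaluate [B u = z u] at the index [j] maximising [|u_i| / x_i]. *)
have : `|z| * `|u j 0| <= c * `|u j 0|.
  rewrite -normrM (_ : z * u j 0 = (B *m u) j 0); last by rewrite Bu mxE.
  rewrite mxE (le_trans (ler_norm_sum _ _ _)) //.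
  apply: le_trans (_ : \sum_i B j i * (ratio j * x i 0) <= _).
    by apply: ler_sum => i _; rewrite normrM ger0_norm ?ler_wpM2l.
  rewrite (_ : \sum_i _ = ratio j * (B *m x) j 0).
    by rewrite Bx mxE u_j mulrCA.
  by rewrite mxE mulr_sumr; apply: eq_bigr => i _; rewrite mulrCA.
by rewrite ler_pM2r // u_j mulr_gt0.
Qed.

End NonnegativeMatrices.

Lemma specrad_pos_eigvec m (B : 'M[algC]_m) (x : 'cV[algC]_m) c : nnmx B ->
  (forall i, 0 < x i 0) -> x != 0 -> B *m x = c *: x -> specrad B = c.
Proof.
move=> B_ge0 x_gt0 nz_x Bx.
have bound := norm_eigval_le_pos_eigval B_ge0 x_gt0 Bx.
have c_ge0 : 0 <= c := le_trans (normr_ge0 c) (bound _ _ Bx nz_x).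
apply/le_anti/andP; split; first exact: specrad_le.
by rewrite -[leLHS](ger0_norm c_ge0); apply: specrad_ge Bx nz_x.
Qed.

Section Submatrices.
Variables (n : nat) (B : 'M[algC]_n) (S : {set 'I_n}).

Definition subv (x : 'cV[algC]_n) : 'cV[algC]_#|S| := \col_(j < #|S|) x (enum_val j) 0.

Lemma subv_neq0 (x : 'cV[algC]_n) v : v \in S -> x v 0 != 0 -> subv x != 0.
Proof.
move=> Sv; apply: contraNneq => /matrixP /(_ (enum_rank_in Sv v) 0).
by move=> /eqP; rewrite !mxE enum_rankK_in.
Qed.

Lemma submx_eigvec (x : 'cV[algC]_n) c :
  (forall v w, v \in S -> w \notin S -> B v w * x w 0 = 0) ->
  B *m x = c *: x -> submx_sq B S *m subv x = c *: subv x.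
Proof.
move=> B_x_out Bx; apply/matrixP => j z; rewrite (ord1 z) !mxE.
rewrite (_ : c * _ = (B *m x) (enum_val j) 0); last by rewrite Bx mxE.
rewrite mxE (bigID (mem S)) /= [X in _ = _ + X]big1 ?addr0 => [|w /B_x_out -> //].
  by rewrite (big_enum_val (A := mem S)); apply: eq_bigr => i _; rewrite !mxE.
exact: enum_valP.
Qed.

Lemma specrad_submx_ge (x : 'cV[algC]_n) c v :
  (forall v w, v \in S -> w \notin S -> B v w * x w 0 = 0) ->
  B *m x = c *: x -> v \in S -> x v 0 != 0 -> `|c| <= specrad (submx_sq B S).
Proof.
by move=> B_x_out Bx Sv xv; apply: specrad_ge (submx_eigvec B_x_out Bx) (subv_neq0 Sv xv).
Qed.

End Submatrices.

Definition normalized_eigvec n (A : 'M[algC]_n) (r : algC) (S : {set 'I_n})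
    (y : 'cV[algC]_n) : Prop :=
  (forall v, 0 <= y v 0) /\ \sum_v `|y v 0| = 1 /\ A *m y = r *: y /\
  (forall v, v \notin S -> y v 0 = 0).

Lemma mul_unique_normalized_eigvec n (A B : 'M[algC]_n) r S x :
  (forall y, normalized_eigvec A r S y <-> y = x) ->
  nnmx B -> B *m A = A *m B -> (forall v w, v \notin S -> w \in S -> B v w = 0) ->
  B *m x = (\sum_v `|(B *m x) v 0|) *: x.
Proof.
move=> x_unique B_ge0 BA B_out; have [x_ge0 [_ [Ax x_out]]] := proj2 (x_unique x) erefl.
set y := B *m x; set s := \sum_v _.
have y_ge0 v : 0 <= y v 0 by rewrite mxE sumr_ge0 // => w _; rewrite mulr_ge0.
have y_out v : v \notin S -> y v 0 = 0.
  move=> Sv; rewrite mxE big1 // => w _.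
  by have [Sw | /x_out->] := boolP (w \in S); rewrite ?mulr0 ?B_out ?mul0r.
have s_ge0 : 0 <= s by rewrite sumr_ge0.
have [s0 | nz_s] := eqVneq s 0.
  rewrite s0 scale0r; apply/matrixP => v j; rewrite (ord1 j) [RHS]mxE; apply: normr0_eq0.
  by apply: (psumr_eq0P (P := predT) (F := fun w => `|y w 0|)) => // w _.
suff <- : s^-1 *: y = x by rewrite scalerA divff ?scale1r.
apply/x_unique; split; [|split; [|split]] => [v | | | v Sv].
- by rewrite mxE mulr_ge0 ?invr_ge0.
- under eq_bigr => v _ do rewrite mxE normrM (ger0_norm (x := s^-1)) ?invr_ge0 //.
  by rewrite -mulr_sumr mulVf.
- by rewrite -scalemxAr /y mulmxA -BA -mulmxA Ax -scalemxAr scalerA mulrC -scalerA.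
- by rewrite mxE y_out ?mulr0.
Qed.

Section HarmonicComponent.
Variables (k n : nat) (G : kgraph_data k n).
Hypothesis HG : is_kgraph G.

Lemma nnmx_vmx i : nnmx (vmx G i).
Proof. by move=> v w; rewrite mxE ler0n. Qed.

Lemma nnmx_vmx_seq F : nnmx (vmx_seq G F).
Proof.
apply: (big_ind (@nnmx _ n n)) => [v w | A B A_ge0 B_ge0 v w | a _].
- by rewrite mxE.
- by rewrite mxE addr_ge0.
apply: (big_ind (@nnmx _ n n)) => [v w | A B A_ge0 B_ge0 | j _].
- by rewrite mxE ler0n.
- by rewrite -mulmxE; apply: nnmx_mul.
elim: (a j) => [|e IH]; first by move=> v w; rewrite expr0 mxE ler0n.
by rewrite exprS -mulmxE; apply: nnmx_mul (nnmx_vmx j) IH.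
Qed.

Lemma vmx_neq0_vle i v w : vmx G i v w != 0 -> vle G v w.
Proof.
rewrite mxE pnatr_eq0 -lt0n -has_count => /hasP [l _ /andP [/eqP <- /eqP <-]].
by exists l.
Qed.

Lemma vmx_vclosure_out C i v w :
  v \notin vclosure G C -> w \in vclosure G C -> vmx G i v w = 0.
Proof.
move=> nCv Cw; apply: contraNeq nCv => /vmx_neq0_vle vw.
exact: (vle_vclosure HG vw Cw).
Qed.

Lemma vmx_component_out C (x : 'cV[algC]_n) i : is_component G C ->
  (forall v, v \notin vclosure G C -> x v 0 = 0) ->
  forall v w, v \in C -> w \notin C -> vmx G i v w * x w 0 = 0.
Proof.
move=> HC x_out v w Cv nCw.
have [vw0 | /vmx_neq0_vle vw] := eqVneq (vmx G i v w) 0; first by rewrite vw0 mul0r.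
have [Cw | /x_out ->] := boolP (w \in vclosure G C); last by rewrite mulr0.
by rewrite (component_vclosure HG HC Cv Cw vw) in nCw.
Qed.

Section EigenvectorForF.
Variables (F : seq (deg k)) (C : {set 'I_n}) (x : 'cV[algC]_n).
Hypothesis HC : F_harmonic G F C.
Hypothesis AFx : vmx_seq G F *m x = specrad (submx_sq (vmx_seq G F) C) *: x.
Hypothesis x_out : forall v, v \notin vclosure G C -> x v 0 = 0.

Lemma F_harmonic_eigvec_support : x != 0 -> exists2 v, v \in C & x v 0 != 0.
Proof.
case: HC => _ [_ harm] /cV_neq0P [w xw]; apply/exists_inP; apply: contraT => /exists_inPn x_C.
have Dw : w \in vclosure G C :\: C.
  rewrite in_setD; apply/andP; split; first by apply: contraL xw => /x_C.
  by apply: contraTT xw => /x_out ->; rewrite eqxx.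
case: harm => [D0 | lt_D]; first by rewrite D0 inE in Dw.
have x_offD v u : v \in vclosure G C :\: C -> u \notin vclosure G C :\: C ->
    vmx_seq G F v u * x u 0 = 0.
  move=> _; rewrite in_setD negb_and negbK => /orP [/x_C /negbNE /eqP | /x_out] ->;
  by rewrite mulr0.
have := specrad_submx_ge x_offD AFx Dw xw.
by rewrite ger0_norm ?specrad_ge0 // => /(lt_le_trans lt_D); rewrite ltxx.
Qed.

Lemma F_harmonic_eigvec_pos : well_chosen G F -> (forall v, 0 <= x v 0) -> x != 0 ->
  forall u, u \in C -> 0 < x u 0.
Proof.
move=> [_ wchosen] x_ge0 /F_harmonic_eigvec_support [v0 Cv0 xv0] u Cu.
case: HC => HCc [nontriv _].
apply: (nnmx_eigvec_pos (nnmx_vmx_seq F) x_ge0 AFx (v := v0)).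
  exact/wchosen/(component_nzpath HG HCc).
by rewrite lt_def xv0 x_ge0.
Qed.

End EigenvectorForF.
End HarmonicComponent.

Theorem lemma7p7 (k n : nat) (G : kgraph_data k n)
  (HG : is_kgraph G) (Hfin : kgraph_finite G) (Hns : no_sources G)
  (F : seq (deg k)) (HF : well_chosen G F)
  (C : {set 'I_n}) (HC : F_harmonic G F C)
  (x : 'cV[algC]_n)
  (Hx_unique : forall y : 'cV[algC]_n,
      ((forall v, 0 <= y v 0) /\
       \sum_v `|y v 0| = 1 /\
       vmx_seq G F *m y = specrad (submx_sq (vmx_seq G F) C) *: y /\
       (forall v, v \notin vclosure G C -> y v 0 = 0)) <-> y = x) :
  forall i : 'I_k, vmx G i *m x = specrad (submx_sq (vmx G i) C) *: x.
Proof.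
move=> i; have [x_ge0 [x_norm [AFx x_out]]] := proj2 (Hx_unique x) erefl.
have nz_x : x != 0.
  apply: contra_eq_neq x_norm => ->.
  by rewrite big1 1?eq_sym ?oner_eq0 // => v _; rewrite mxE normr0.
have Ai_x := mul_unique_normalized_eigvec Hx_unique (nnmx_vmx G i)
  (vmx_seq_comm HG Hfin F i) (vmx_vclosure_out HG i).
have [v0 Cv0 xv0] := F_harmonic_eigvec_support HC AFx x_out nz_x.
have Ai_xC := submx_eigvec (vmx_component_out HG i (proj1 HC) x_out) Ai_x.
rewrite Ai_x (specrad_pos_eigvec _ _ (subv_neq0 Cv0 xv0) Ai_xC) //.
- by move=> a b; rewrite mxE nnmx_vmx.
- by move=> j; rewrite mxE (F_harmonic_eigvec_pos HG HC AFx x_out HF x_ge0 nz_x) ?enum_valP.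
Qed.
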